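(* Let $s=(s_1,\ldots,s_n)$ be a sequence of positive integers and let $F$ be a nonempty face of the $s$-lecture hall simplex $P_n^s$, of dimension $m$. Then $\ell^\ast(F;z)=d_m^\mu(z)$ for some sequence $\mu=(\mu_1,\ldots,\mu_m)$ of positive integers.
   Context: For a sequence $t=(t_1,\ldots,t_m)$ of positive integers, $P_m^t=\{x\in\mathbb{R}^m:0\le x_1/t_1\le\cdots\le x_m/t_m\le1\}$ (a point when $m=0$), and $d_m^t(z)=\ell^\ast(P_m^t;z)$. For a lattice $d$-simplex $\Delta=\mathrm{conv}(v^{(0)},\ldots,v^{(d)})\subset\mathbb{R}^N$, $\ell^\ast(\Delta;z)=\sum_{x\in\Pi^\circ_\Delta\cap\mathbb{Z}^{N+1}}z^{x_{N+1}}$, where $\Pi^\circ_\Delta=\{\sum_i\lambda_i(v^{(i)},1):0<\lambda_i<1\}$. *)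

From HB Require Import structures.
From mathcomp Require Import all_boot all_order all_algebra.
From mathcomp Require Import finmap.
From mathcomp Require Import boolp classical_sets cardinality.
From mathcomp Require Import Rstruct.
From Stdlib Require Import Rdefinitions.
Set Implicit Arguments. Unset Strict Implicit. Unset Printing Implicit Defensive.
Import Order.TTheory GRing.Theory Num.Theory.
Local Open Scope classical_set_scope.
Local Open Scope ring_scope.

Definition toR (N : nat) (v : 'rV[int]_N) : 'rV[R]_N := map_mx (fun z : int => z%:~R) v.

(* (v, 1) in R^(N+1): the last coordinate (index ord_max) is 1. *)
Definition lift1 (N : nat) (v : 'rV[R]_N) : 'rV[R]_N.+1 :=
  \row_(j < N.+1) (if unlift ord_max j is Some k then v 0 k else 1).

Definition conv (N d : nat) (v : 'I_d.+1 -> 'rV[R]_N) : set 'rV[R]_N :=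
  [set x | exists lam : 'I_d.+1 -> R,
     (forall i, 0 <= lam i) /\ \sum_i lam i = 1 /\ x = \sum_i lam i *: v i].

Definition aff_indep (N k : nat) (p : 'I_k.+1 -> 'rV[R]_N) : Prop :=
  \rank (\matrix_(i < k, j < N) (p (lift ord0 i) 0 j - p ord0 0 j)) = k.

Definition has_dim (N : nat) (S : set 'rV[R]_N) (m : nat) : Prop :=
  (exists p : 'I_m.+1 -> 'rV[R]_N, (forall i, S (p i)) /\ aff_indep p) /\
  (forall p : 'I_m.+2 -> 'rV[R]_N, (forall i, S (p i)) -> ~ aff_indep p).

(* F is a face of P (via a supporting hyperplane; a = 0, b = 0 gives P itself) *)
Definition dotv (N : nat) (a y : 'rV[R]_N) : R := \sum_(j < N) a 0 j * y 0 j.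
Definition is_face (N : nat) (P F : set 'rV[R]_N) : Prop :=
  exists (a : 'rV[R]_N) (b : R),
    (forall y, P y -> dotv a y <= b) /\ F = P `&` [set y | dotv a y = b].

Definition in_open_pp (N d : nat) (v : 'I_d.+1 -> 'rV[int]_N) (x : 'rV[R]_N.+1) : Prop :=
  exists lam : 'I_d.+1 -> R,
    (forall i, 0 < lam i < 1) /\ x = \sum_i lam i *: lift1 (toR (v i)).

(* l^*(Delta; z) = sum over lattice points x of Pi° of z^(x_(N+1)).
   The last coordinate of a point of Pi° is sum lam_i in (0, d+1), so only
   exponents 0..d occur. *)
Definition lstar_v (N d : nat) (v : 'I_d.+1 -> 'rV[int]_N) : {poly int} :=
  \poly_(k < d.+1)
    (#|` fset_set [set x : 'rV[int]_N.+1 |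
                    in_open_pp v (toR x) /\ x 0 ord_max = k%:Z] |)%:Z.

Definition lattice_simplex_with (N d : nat) (S : set 'rV[R]_N)
  (v : 'I_d.+1 -> 'rV[int]_N) : Prop :=
  aff_indep (fun i => toR (v i)) /\ S = conv (fun i => toR (v i)).

(* l^*(Delta; z) for a lattice d-simplex Delta given as a set
   (computed from any enumeration of its vertices; 0 if Delta is not one). *)
Definition lstar (N d : nat) (S : set 'rV[R]_N) : {poly int} :=
  match pselect (exists v : 'I_d.+1 -> 'rV[int]_N, lattice_simplex_with S v) with
  | left H => lstar_v (projT1 (cid H))
  | right _ => 0
  end.

Definition lecture_hall (m : nat) (t : 'I_m -> nat) : set 'rV[R]_m :=
  [set x : 'rV[R]_m | (forall j : 'I_m, 0 <= x 0 j / (t j)%:R <= 1) /\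
           (forall i j : 'I_m, leq i j -> x 0 i / (t i)%:R <= x 0 j / (t j)%:R)].

Definition dpoly (m : nat) (t : 'I_m -> nat) : {poly int} := lstar m (lecture_hall t).

(* The vertices of P_n^s are w_k = (0,..,0,s_(k+1),..,s_n), k = 0..n; they are
   affinely independent, so a nonempty face F is the simplex spanned by the
   vertices w_(k_0), .., w_(k_m) (k_0 < .. < k_m) lying on a supporting
   hyperplane, and m is its dimension. The point sum_i lam_i (w_(k_i), 1) has
   j-th coordinate s_j (lam_0 + .. + lam_(b-1)), where b is the number of
   k_i <= j, and height lam_0 + .. + lam_m. Grouping coordinates with the same
   b into blocks, by Bezout the point is integral iff mu_b (lam_0 + .. + lam_b)
   is an integer for every b < m, where mu_b is the gcd of the s_j of block
   b + 1, and the height is an integer. These are exactly the integrality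
   conditions for sum_i lam_i (w'_i, 1) over P_m^mu, so multiplying the
   coordinates of block b + 1 by s_j / mu_b is a bijection between the lattice
   points of the two open parallelepipeds which preserves the height. *)

From HB Require Import structures.
From mathcomp Require Import all_boot all_order all_algebra.
From mathcomp Require Import finmap.
From mathcomp Require Import boolp classical_sets cardinality.
From mathcomp Require Import Rstruct.
From mathcomp Require Import fingroup perm.
From Stdlib Require Import Rdefinitions.
Set Implicit Arguments. Unset Strict Implicit. Unset Printing Implicit Defensive.
Import Order.TTheory GRing.Theory Num.Theory.
Local Open Scope classical_set_scope.
Local Open Scope ring_scope.

Definition aff_free (N k : nat) (p : 'I_k.+1 -> 'rV[R]_N) : Prop :=
  forall c : 'I_k.+1 -> R,
    \sum_i c i = 0 -> \sum_i c i *: p i = 0 -> forall i, c i = 0.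

Lemma comb_mxE (N d : nat) (lam : 'I_d -> R) (p : 'I_d -> 'rV[R]_N) (j : 'I_N) :
  (\sum_i lam i *: p i) 0 j = \sum_i lam i * p i 0 j.
Proof. by rewrite summxE; apply: eq_bigr => i _; rewrite mxE. Qed.

Lemma sum_deltaZ (V : lmodType R) (n : nat) (F : 'I_n -> V) (j : 'I_n) :
  \sum_l (l == j)%:R *: F l = F j.
Proof.
by rewrite (bigD1 j) //= eqxx scale1r big1 ?addr0 // => l /negbTE ->; rewrite scale0r.
Qed.

Lemma sum_delta (n : nat) (j : 'I_n) : \sum_l ((l == j)%:R : R) = 1.
Proof. by rewrite (bigD1 j) //= eqxx big1 ?addr0 // => l /negbTE ->. Qed.

Lemma sum_scaler_sum (V : lmodType R) (I J : finType) (u : I -> R) (a : I -> J -> R)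
    (p : J -> V) :
  \sum_i u i *: \sum_l a i l *: p l = \sum_l (\sum_i u i * a i l) *: p l.
Proof.
under eq_bigr => i _ do rewrite scaler_sumr.
rewrite exchange_big /=; apply: eq_bigr => l _.
by rewrite scaler_suml; apply: eq_bigr => i _; rewrite scalerA.
Qed.

Lemma sum_pushforward (V : lmodType R) (I J : finType) (k : I -> J) (lam : I -> R)
    (p : J -> V) :
  \sum_l (\sum_(i | k i == l) lam i) *: p l = \sum_i lam i *: p (k i).
Proof.
rewrite (partition_big k predT) //=; apply: eq_bigr => l _.
by rewrite scaler_suml; apply: eq_bigr => i /eqP ->.
Qed.

Lemma mulmx_diff_rows (N k : nat) (p : 'I_k.+1 -> 'rV[R]_N) (u : 'rV[R]_k) :
  u *m (\matrix_(i < k, j < N) (p (lift ord0 i) 0 j - p ord0 0 j)) =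
  \sum_i u 0 i *: (p (lift ord0 i) - p ord0).
Proof. by apply/rowP => j; rewrite !mxE summxE; apply: eq_bigr => i _; rewrite !mxE. Qed.

Lemma affine_comb_diff (N k : nat) (p : 'I_k.+1 -> 'rV[R]_N) (c : 'I_k.+1 -> R) :
  \sum_i c i = 0 ->
  \sum_i c i *: p i = \sum_(i < k) c (lift ord0 i) *: (p (lift ord0 i) - p ord0).
Proof.
rewrite big_ord_recl addrC => /eqP; rewrite addr_eq0 => /eqP c0.
under [RHS]eq_bigr => i _ do rewrite scalerBr.
by rewrite big_ord_recl sumrB -scaler_suml c0 scaleNr opprK addrC.
Qed.

Lemma aff_indepP (N k : nat) (p : 'I_k.+1 -> 'rV[R]_N) : aff_indep p <-> aff_free p.
Proof.
rewrite /aff_indep; set M := \matrix_(i < k, j < N) _.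
have rowM : row_free M <-> (\rank M = k) by rewrite /row_free; split => /eqP.
rewrite -rowM; split => [freeM c c_sum c_comb | p_free].
  pose u := \row_(i < k) c (lift ord0 i).
  have u0 : u = 0.
    apply/eqP; rewrite -(mulmx_free_eq0 _ freeM) mulmx_diff_rows.
    rewrite -[X in _ == X]c_comb (affine_comb_diff _ c_sum); apply/eqP.
    by apply: eq_bigr => i _; rewrite mxE.
  have c_lift i : c (lift ord0 i) = 0 by have /rowP/(_ i) := u0; rewrite !mxE.
  move=> i; case: (unliftP ord0 i) => [j ->|->]; first exact: c_lift.
  by move: c_sum; rewrite big_ord_recl big1 ?addr0.
apply: inj_row_free => u uM0.
pose c l := if unlift ord0 l is Some i then u 0 i else - \sum_i u 0 i.
have c_lift i : c (lift ord0 i) = u 0 i by rewrite /c liftK.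
have c_sum : \sum_l c l = 0.
  by rewrite big_ord_recl /c unlift_none (eq_bigr _ (fun i _ => c_lift i)) addNr.
have c_comb : \sum_l c l *: p l = 0.
  rewrite (affine_comb_diff _ c_sum) -[RHS]uM0 mulmx_diff_rows.
  by apply: eq_bigr => i _; rewrite c_lift.
by apply/rowP => i; rewrite -c_lift (p_free c c_sum c_comb) mxE.
Qed.

Section AffFree.
Variables (N k : nat) (p : 'I_k.+1 -> 'rV[R]_N).
Hypothesis p_free : aff_free p.

Lemma aff_free_coord (a b : 'I_k.+1 -> R) :
  \sum_i a i = 1 -> \sum_i b i = 1 ->
  \sum_i a i *: p i = \sum_i b i *: p i -> a =1 b.
Proof.
move=> a1 b1 ab i; apply/eqP; rewrite -subr_eq0; apply/eqP.
apply: (p_free (c := fun i => a i - b i)); first by rewrite sumrB a1 b1 subrr.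
by under eq_bigr => l _ do rewrite scalerBl; rewrite sumrB ab subrr.
Qed.

Lemma aff_free_inj : injective p.
Proof.
move=> i j pij; apply/eqP/negP => /negP ij.
have := aff_free_coord (sum_delta i) (sum_delta j).
rewrite !sum_deltaZ pij => /(_ erefl i).
by rewrite eqxx (negbTE ij) => /eqP; rewrite oner_eq0.
Qed.

Lemma aff_free_comp (m : nat) (f : 'I_m.+1 -> 'I_k.+1) :
  injective f -> aff_free (fun i => p (f i)).
Proof.
move=> f_inj c c_sum c_comb i.
pose c' l := \sum_(i | f i == l) c i.
have c'0 : forall l, c' l = 0.
  apply: p_free; last by rewrite sum_pushforward.
  by rewrite -[RHS]c_sum [RHS](partition_big f predT).
by have := c'0 (f i); rewrite /c' (big_pred1 i) // => j; apply/eqP/eqP => [/f_inj|->].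
Qed.

End AffFree.

Section ConvexHull.
Variables (N d : nat) (p : 'I_d.+1 -> 'rV[R]_N).

Lemma conv_vertex_mem j : conv p (p j).
Proof.
exists (fun l => (l == j)%:R); split; first by move=> l; rewrite ler0n.
by rewrite sum_delta sum_deltaZ.
Qed.

Lemma conv_comp_sub (c : nat) (k : 'I_c.+1 -> 'I_d.+1) :
  conv (fun i => p (k i)) `<=` conv p.
Proof.
move=> _ [lam [lam_ge0 [lam_sum ->]]].
exists (fun l => \sum_(i | k i == l) lam i); split; last split.
- by move=> l; apply: sumr_ge0 => i _; apply: lam_ge0.
- by rewrite -[RHS]lam_sum [RHS](partition_big k predT).
- by rewrite sum_pushforward.
Qed.

Lemma conv_weight_gt0 (lam : 'I_d.+1 -> R) :
  (forall i, 0 <= lam i) -> \sum_i lam i = 1 -> exists i, 0 < lam i.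
Proof.
move=> lam_ge0 lam_sum; apply/existsP; apply: contraLR isT => /existsPn lam_le0.
suff : \sum_i lam i = 0 by rewrite lam_sum => /eqP; rewrite oner_eq0.
by apply: big1 => i _; apply/eqP; rewrite eq_le lam_ge0 andbT leNgt lam_le0.
Qed.

End ConvexHull.

(* [q j] is a convex combination of the [p i], which are convex combinations
   of the [q l]; by uniqueness of affine coordinates, any [p i] with a
   positive weight equals [q j]. *)
Lemma conv_vertex (N d : nat) (p q : 'I_d.+1 -> 'rV[R]_N) :
  aff_free q -> conv p = conv q -> forall j, exists i, q j = p i.
Proof.
move=> q_free pq j.
have [mu [mu_ge0 [mu_sum qj]]] : conv p (q j) by rewrite pq; apply: conv_vertex_mem.
have /choice[nu nuP] i : exists nu, (forall l, 0 <= nu l) /\ \sum_l nu l = 1 /\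
    p i = \sum_l nu l *: q l.
  by have : conv q (p i) by rewrite -pq; apply: conv_vertex_mem.
have comp_sum : \sum_l (\sum_i mu i * nu i l) = 1.
  rewrite exchange_big /= -mu_sum; apply: eq_bigr => i _.
  by rewrite -mulr_sumr (nuP i).2.1 mulr1.
have comp_delta : forall l, \sum_i mu i * nu i l = (l == j)%:R.
  apply: (aff_free_coord q_free comp_sum (sum_delta j)).
  rewrite sum_deltaZ qj -sum_scaler_sum; apply: eq_bigr => i _.
  by rewrite -(nuP i).2.2.
have [i mu_i] := conv_weight_gt0 mu_ge0 mu_sum.
have nu_off l : l != j -> nu i l = 0.
  move=> lj; have terms_ge0 i' : true -> 0 <= mu i' * nu i' l.
    by move=> _; rewrite mulr_ge0 // (nuP i').1.
  have := psumr_eq0P terms_ge0; rewrite comp_delta (negbTE lj) => /(_ erefl i isT).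
  by move/eqP; rewrite mulf_eq0 (gt_eqF mu_i) => /eqP.
have nu_j : nu i j = 1.
  by rewrite -(nuP i).2.1 (bigD1 j) //= big1 ?addr0.
exists i; rewrite (nuP i).2.2 (bigD1 j) //= big1 ?addr0 ?nu_j ?scale1r //.
by move=> l /nu_off ->; rewrite scale0r.
Qed.

Lemma aff_free_conv_le (N c m : nat) (p : 'I_c.+1 -> 'rV[R]_N) (q : 'I_m.+1 -> 'rV[R]_N) :
  aff_free q -> (forall i, conv p (q i)) -> (m <= c)%nat.
Proof.
move=> q_free q_in.
have /choice[al al_spec] i : exists al : 'I_c.+1 -> R,
    \sum_l al l = 1 /\ q i = \sum_l al l *: p l.
  by have [al [_ al_q]] := q_in i; exists al.
have al_sum i : \sum_l al i l = 1 := (al_spec i).1.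
have q_al i : q i = \sum_l al i l *: p l := (al_spec i).2.
pose A := \matrix_(i < m.+1, l < c.+1) al i l.
suff : row_free A by rewrite -row_leq_rank => /leq_trans/(_ (rank_leq_col A)).
apply: inj_row_free => u uA0.
have u_al l : \sum_i u 0 i * al i l = 0.
  by have /rowP/(_ l) := uA0; rewrite !mxE; under eq_bigr do rewrite /A mxE.
apply/rowP => i; rewrite [RHS]mxE; apply: q_free i.
  transitivity (\sum_(l < c.+1) \sum_i u 0 i * al i l); last exact: big1.
  rewrite exchange_big /=; apply: eq_bigr => i' _.
  by rewrite -mulr_sumr al_sum mulr1.
under eq_bigr => i' _ do rewrite q_al.
by rewrite sum_scaler_sum big1 // => l _; rewrite u_al scale0r.
Qed.

Lemma has_dim_conv (N c m : nat) (p : 'I_c.+1 -> 'rV[R]_N) :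
  aff_free p -> has_dim (conv p) m -> c = m.
Proof.
move=> p_free [[q [q_in /aff_indepP q_free]] no_indep].
apply/eqP; rewrite eqn_leq (aff_free_conv_le q_free q_in) andbT leqNgt.
apply/negP => mc; apply: (no_indep (fun i => p (widen_ord (mc : (m.+2 <= c.+1)%nat) i))).
  by move=> i; apply: conv_vertex_mem.
by apply/aff_indepP/aff_free_comp => // i j /(congr1 val) /= /val_inj.
Qed.

Lemma toR_inj (N : nat) : injective (@toR N).
Proof. by move=> x y /rowP xy; apply/rowP => j; have := xy j; rewrite !mxE => /intr_inj. Qed.

Lemma eq_lstar_v (N d : nat) (v w : 'I_d.+1 -> 'rV[int]_N) :
  (forall x, in_open_pp v x <-> in_open_pp w x) -> lstar_v v = lstar_v w.
Proof.
move=> vw; apply: eq_poly => k _; congr (#|` fset_set _|%:Z).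
by apply/seteqP; split => x /= [/vw xv xk].
Qed.

Lemma in_open_pp_perm (N d : nat) (v w : 'I_d.+1 -> 'rV[int]_N) (s : 'S_d.+1) :
  (forall i, w i = v (s i)) -> forall x, in_open_pp w x <-> in_open_pp v x.
Proof.
move=> ws x; split=> -[lam [lam01 ->]].
  exists (fun i => lam (s^-1 i)%g); split => [i|]; first exact: lam01.
  by rewrite [RHS](reindex_inj (@perm_inj _ s)); apply: eq_bigr => i _; rewrite permK ws.
exists (fun i => lam (s i)); split => [i|]; first exact: lam01.
by rewrite [LHS](reindex_inj (@perm_inj _ s)); apply: eq_bigr => i _; rewrite ws.
Qed.

Lemma lattice_simplex_perm (N d : nat) (S : set 'rV[R]_N) (v w : 'I_d.+1 -> 'rV[int]_N) :
  lattice_simplex_with S v -> lattice_simplex_with S w ->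
  exists s : 'S_d.+1, forall i, w i = v (s i).
Proof.
move=> [_ Sv] [/aff_indepP w_free Sw].
have /choice[f wf] j : exists i, w j = v i.
  by have [i /toR_inj] := conv_vertex w_free (etrans (esym Sv) Sw) j; exists i.
have f_inj : injective f.
  by move=> i j fij; apply: (aff_free_inj w_free); rewrite /= !wf fij.
by exists (perm f_inj) => i; rewrite permE.
Qed.

Lemma lstar_simplex (N d : nat) (S : set 'rV[R]_N) (v : 'I_d.+1 -> 'rV[int]_N) :
  lattice_simplex_with S v -> lstar d S = lstar_v v.
Proof.
move=> Sv; rewrite /lstar; case: pselect => [ex|]; last by case; exists v.
have [s ws] := lattice_simplex_perm (projT2 (cid ex)) Sv.
exact/esym/eq_lstar_v/(in_open_pp_perm ws).
Qed.

Lemma incr_ord_inj (c : nat) (f : 'I_c -> nat) :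
  {homo f : i j / (i < j)%nat} -> injective f.
Proof.
by move=> f_incr i j fij; apply/val_inj; case: (ltngtP i j) => // /f_incr; rewrite fij ltnn.
Qed.

Lemma incr_ord_leq (c : nat) (f : 'I_c -> nat) :
  {homo f : i j / (i < j)%nat} -> {homo f : i j / (i <= j)%nat}.
Proof.
move=> f_incr i j; rewrite leq_eqVlt => /orP[/eqP/val_inj -> //|/f_incr].
exact: ltnW.
Qed.

Lemma ord_set_enum (n : nat) (T : {set 'I_n}) : (0 < #|T|)%nat ->
  exists c (k : 'I_c.+1 -> 'I_n), {homo k : i j / (i < j)%nat} /\ T = k @: [set: 'I_c.+1]%SET.
Proof.
move=> T0; have [x0 _] := card_gt0P T0.
case cT: #|T| T0 => [|c] // _.
have T_sorted : sorted (fun a b : 'I_n => (a < b)%nat) (enum T).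
  have : sorted ltn (map val (enum T)).
    rewrite -[enum _](eq_filter (mem_enum _)).
    rewrite -(eq_filter (mem_map val_inj _)) -filter_map.
    by rewrite (sorted_filter ltn_trans) // unlock val_ord_enum iota_ltn_sorted.
  by rewrite sorted_map.
have size_T : size (enum T) = c.+1 by rewrite -cardE.
exists c, (fun i => nth x0 (enum T) i); split.
  have lt_tr : transitive (fun a b : 'I_n => (a < b)%nat) by move=> ? ? ?; apply: ltn_trans.
  by move=> i j; apply: (sorted_ltn_nth lt_tr x0 T_sorted); rewrite inE size_T.
apply/setP => j; apply/idP/imsetP => [Tj|[i _ ->]]; last by rewrite -mem_enum mem_nth ?size_T.
have jT : (index j (enum T) < c.+1)%nat by rewrite -size_T index_mem mem_enum.
by exists (Ordinal jT); rewrite ?in_setT // nth_index ?mem_enum.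
Qed.

Lemma dotv_comb (N d : nat) (a : 'rV[R]_N) (lam : 'I_d -> R) (p : 'I_d -> 'rV[R]_N) :
  dotv a (\sum_i lam i *: p i) = \sum_i lam i * dotv a (p i).
Proof.
rewrite /dotv; under eq_bigr => j _ do rewrite comb_mxE mulr_sumr.
rewrite exchange_big /=; apply: eq_bigr => i _; rewrite mulr_sumr.
by apply: eq_bigr => j _; rewrite mulrCA.
Qed.

Lemma face_weight_eq0 (N d : nat) (p : 'I_d.+1 -> 'rV[R]_N) (a : 'rV[R]_N) (b : R)
    (lam : 'I_d.+1 -> R) :
  (forall i, dotv a (p i) <= b) -> (forall i, 0 <= lam i) -> \sum_i lam i = 1 ->
  dotv a (\sum_i lam i *: p i) = b -> forall i, dotv a (p i) != b -> lam i = 0.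
Proof.
move=> ab_le lam_ge0 lam_sum on_face i off_i.
have terms_ge0 l : true -> 0 <= lam l * (b - dotv a (p l)).
  by move=> _; rewrite mulr_ge0 // subr_ge0.
have := psumr_eq0P terms_ge0; rewrite /=.
under eq_bigr => l _ do rewrite mulrBr.
rewrite sumrB -mulr_suml lam_sum mul1r -dotv_comb on_face subrr => /(_ erefl i isT).
by move/eqP; rewrite mulf_eq0 subr_eq0 [b == _]eq_sym (negbTE off_i) orbF => /eqP.
Qed.

Lemma face_conv (N d : nat) (p : 'I_d.+1 -> 'rV[R]_N) (F : set 'rV[R]_N) :
  is_face (conv p) F -> F !=set0 ->
  exists c (k : 'I_c.+1 -> 'I_d.+1),
    {homo k : i j / (i < j)%nat} /\ F = conv (fun i => p (k i)).
Proof.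
move=> [a [b [ab_le ->]]] [_ [[lam [lam_ge0 [lam_sum ->]]] on_face]].
have p_le i : dotv a (p i) <= b by apply/ab_le/conv_vertex_mem.
pose T : {set 'I_d.+1} := [set l | dotv a (p l) == b]%SET.
have T0 : (0 < #|T|)%nat.
  have [l lam_l] := conv_weight_gt0 lam_ge0 lam_sum.
  apply/card_gt0P; exists l; rewrite inE; apply: contraTT lam_l => off_l.
  by rewrite (face_weight_eq0 p_le lam_ge0 lam_sum on_face off_l) ltxx.
have [c [k [k_incr Tk]]] := ord_set_enum T0.
have k_inj : injective k by move=> i j /(congr1 val) /(incr_ord_inj k_incr).
have sum_T (V : zmodType) (G : 'I_d.+1 -> V) :
    (forall l, l \notin T -> G l = 0) -> \sum_l G l = \sum_i G (k i).
  move=> G_off; rewrite (bigID (mem T)) /= [X in _ + X]big1 ?addr0 //.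
  rewrite Tk big_imset /=; last by move=> i j _ _ /k_inj.
  by apply: eq_bigl => i; rewrite inE.
exists c, k; split => //; apply/seteqP; split => z.
  move=> [[mu [mu_ge0 [mu_sum ->]]] z_face].
  have mu_off l : l \notin T -> mu l = 0.
    by rewrite inE; apply: face_weight_eq0.
  exists (fun i => mu (k i)); split => //; split; first by rewrite -sum_T.
  by apply: sum_T => l /mu_off ->; rewrite scale0r.
move=> kz; split; first exact: conv_comp_sub kz.
case: kz => mu [_ [mu_sum ->]]; rewrite /= dotv_comb.
have k_face i : dotv a (p (k i)) = b.
  have : k i \in T by rewrite Tk imset_f ?inE.
  by rewrite inE => /eqP.
by under eq_bigr => i _ do rewrite k_face; rewrite -mulr_suml mu_sum mul1r.
Qed.

Lemma ler_sum_sub (I : finType) (P Q : pred I) (F : I -> R) :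
  (forall i, 0 <= F i) -> (forall i, P i -> Q i) ->
  \sum_(i | P i) F i <= \sum_(i | Q i) F i.
Proof.
move=> F_ge0 PQ; rewrite [X in X <= _]big_mkcond [X in _ <= X]big_mkcond /=.
apply: ler_sum => i _; case: (boolP (P i)) => [/PQ -> //|_].
by case: ifP.
Qed.

Lemma prefix_sums_eq0 (V : zmodType) (d : nat) (c : 'I_d.+1 -> V) :
  (forall j : 'I_d.+1, \sum_(i : 'I_d.+1 | (i <= j)%nat) c i = 0) -> forall i, c i = 0.
Proof.
move=> pre0; suff c0 n (i : 'I_d.+1) : (i < n)%nat -> c i = 0 by move=> i; apply: (c0 i.+1 i).
elim: n i => // n IH i; rewrite ltnS leq_eqVlt => /orP[/eqP iN|]; last exact: IH.
have := pre0 i; rewrite (bigD1 i) //= big1 ?addr0 // => l /andP[li l_i].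
by apply: IH; rewrite -iN ltn_neqAle li andbT.
Qed.

Lemma sum_prefix_telescope (V : zmodType) (N j : nat) (U : nat -> V) : (j <= N)%nat ->
  \sum_(k < N.+1 | (k <= j)%nat) (U k.+1 - U k) = U j.+1 - U 0%nat.
Proof.
move=> jN; rewrite -telescope_sumr // big_mkord.
by rewrite (big_ord_widen N.+1 (fun k => U k.+1 - U k) (jN : (j.+1 <= N.+1)%nat)).
Qed.

Definition lh_vertex (N : nat) (t : 'I_N -> nat) (k : nat) : 'rV[int]_N :=
  \row_j (if (k <= j)%nat then (t j)%:Z else 0).

Lemma lh_vertex_comb (N d : nat) (t : 'I_N -> nat) (k : 'I_d -> nat) (lam : 'I_d -> R)
    (j : 'I_N) :
  (\sum_i lam i *: toR (lh_vertex t (k i))) 0 j = (t j)%:R * \sum_(i | (k i <= j)%nat) lam i.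
Proof.
rewrite comb_mxE mulr_sumr [RHS]big_mkcond; apply: eq_bigr => i _ /=.
by rewrite !mxE; case: ifP; rewrite ?mulr0 // mulrC.
Qed.

Section LectureHall.
Variables (N : nat) (t : 'I_N -> nat).
Hypothesis t_pos : forall j, (0 < t j)%nat.

Let t_neq0 j : (t j)%:R != 0 :> R.
Proof. by rewrite pnatr_eq0 -lt0n. Qed.

Lemma conv_sub_lecture_hall :
  conv (fun k : 'I_N.+1 => toR (lh_vertex t k)) `<=` lecture_hall t.
Proof.
move=> _ [lam [lam_ge0 [lam_sum ->]]].
have ratio j : (\sum_k lam k *: toR (lh_vertex t k)) 0 j / (t j)%:R =
    \sum_(k : 'I_N.+1 | (k <= j)%nat) lam k.
  by rewrite lh_vertex_comb mulrC mulKf.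
split => [j|i j ij]; rewrite !ratio.
  by rewrite sumr_ge0 //= -[X in _ <= X]lam_sum ler_sum_sub.
by apply: ler_sum_sub => // k /leq_trans; apply.
Qed.

(* The weights are the successive differences of the ratios [x_j / t_j],
   completed by a last ratio [1]. *)
Lemma lecture_hall_sub_conv :
  lecture_hall t `<=` conv (fun k : 'I_N.+1 => toR (lh_vertex t k)).
Proof.
move=> x [x_01 x_mono].
pose r (k : nat) : R := if insub k is Some j then x 0 j / (t j)%:R else 1.
have r_ord (j : 'I_N) : r j = x 0 j / (t j)%:R by rewrite /r valK.
have r_end : r N = 1 by rewrite /r insubF // ltnn.
have r_01 k : 0 <= r k <= 1.
  by rewrite /r; case: insubP => [j _ _|_]; [exact: x_01 | rewrite ler01 lexx].
have r_mono k : r k <= r k.+1.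
  case: (ltnP k.+1 N) => [k1N|Nk1].
    by rewrite (r_ord (Ordinal (ltnW k1N))) (r_ord (Ordinal k1N)); apply: x_mono => /=.
  by rewrite [X in _ <= X]/r insubF ?ltnNge ?Nk1 //; case/andP: (r_01 k).
pose U (k : nat) : R := if k is k'.+1 then r k' else 0.
have U_prefix (j : 'I_N.+1) : \sum_(k < N.+1 | (k <= j)%nat) (U k.+1 - U k) = r j.
  by rewrite sum_prefix_telescope ?subr0 // -ltnS.
exists (fun k => U k.+1 - U k); split; [|split].
- by move=> [[|k] kN]; rewrite subr_ge0 /=; [case/andP: (r_01 0%nat) | apply: r_mono].
- rewrite -r_end -(U_prefix ord_max).
  by apply: eq_bigl => k; rewrite -ltnS ltn_ord.
- apply/rowP => j; rewrite lh_vertex_comb.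
  by rewrite (U_prefix (widen_ord (leqnSn N) j)) r_ord mulrC divfK.
Qed.

Lemma lecture_hall_conv :
  lecture_hall t = conv (fun k : 'I_N.+1 => toR (lh_vertex t k)).
Proof. by apply/seteqP; split; [apply: lecture_hall_sub_conv | apply: conv_sub_lecture_hall]. Qed.

Lemma lh_vertex_aff_free : aff_free (fun k : 'I_N.+1 => toR (lh_vertex t k)).
Proof.
move=> c c_sum c_comb; apply: prefix_sums_eq0 => j.
case: (ltnP j N) => [jN|Nj].
  have /rowP/(_ (Ordinal jN)) := c_comb; rewrite lh_vertex_comb mxE.
  by move/eqP; rewrite mulf_eq0 (negbTE (t_neq0 _)) => /eqP.
by rewrite -[RHS]c_sum; apply: eq_bigl => k; rewrite (leq_trans _ Nj) // -ltnS.
Qed.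

End LectureHall.

(* Appending [t_(N+1) = 1] makes the lifted vertices [(w_k, 1)] lecture hall
   vertices in dimension [N + 1], so the height coordinate is treated like
   the others. *)
Definition ext1 (N : nat) (t : 'I_N -> nat) (j : 'I_N.+1) : nat :=
  if unlift ord_max j is Some j' then t j' else 1%nat.

Lemma lift1_lh_vertex (N : nat) (t : 'I_N -> nat) (k : nat) : (k <= N)%nat ->
  lift1 (toR (lh_vertex t k)) = toR (lh_vertex (ext1 t) k).
Proof.
move=> kN; apply/rowP => j; rewrite /lift1 /ext1 !mxE.
by case: unliftP => [j' ->|->]; rewrite ?mxE ?lift_max ?kN.
Qed.

Definition open_pp (N d : nat) (p : 'I_d.+1 -> 'rV[R]_N) : set 'rV[R]_N :=
  [set x | exists lam : 'I_d.+1 -> R,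
     (forall i, 0 < lam i < 1) /\ x = \sum_i lam i *: p i].

Lemma in_open_ppE (N d : nat) (v : 'I_d.+1 -> 'rV[int]_N) :
  in_open_pp v = open_pp (fun i => lift1 (toR (v i))).
Proof. by []. Qed.

Lemma int_num_gcd (I : finType) (P : pred I) (F : I -> nat) (r : R) :
  (forall i, P i -> r * (F i)%:R \is a Num.int) ->
  r * (\big[gcdn/0]_(i | P i) F i)%:R \is a Num.int.
Proof.
move=> rF; apply: (big_ind (fun g => r * g%:R \is a Num.int)) => //; first by rewrite mulr0.
move=> x y rx ry; have [u [v uv]] := Bezoutz x y.
have -> : (gcdn x y)%:R = (u * x + v * y)%:~R :> R by rewrite uv.
rewrite intrD !intrM mulrDr mulrCA [r * (_ * _)]mulrCA.
by apply: rpredD; apply: rpredM; rewrite ?intr_int.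
Qed.

Section FaceBlocks.
Variables (n c : nat) (t : 'I_n.+1 -> nat) (k : 'I_c.+1 -> nat).
Hypotheses (t_pos : forall j, (0 < t j)%nat) (k_incr : {homo k : i j / (i < j)%nat}).
Hypothesis k_le : (k ord_max <= n)%nat.

Let k_leq := incr_ord_leq k_incr.

Let k_le_max (b : 'I_c.+1) : (k b <= k ord_max)%nat.
Proof. exact: (k_leq (leq_ord b : (b <= ord_max)%nat)). Qed.

Let k_lt (b : 'I_c.+1) : (k b < n.+1)%nat.
Proof. by rewrite ltnS (leq_trans (k_le_max b)). Qed.

Definition block (j : 'I_n.+1) : nat := (\max_(i | (k i <= j)%nat) i.+1)%nat.

Lemma blockP (i : 'I_c.+1) (j : 'I_n.+1) : (k i <= j)%nat = (i < block j)%nat.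
Proof.
apply/idP/idP => [kij|].
  exact: (@leq_bigmax_cond _ (fun i => k i <= j)%nat (fun i : 'I_c.+1 => i.+1) i kij).
apply: contraTT; rewrite -ltnNge -leqNgt => jk; apply/bigmax_leqP => i' ki'j.
by rewrite ltnNge; apply/negP => /k_leq /leq_trans/(_ ki'j); rewrite leqNgt jk.
Qed.

Lemma block_le (j : 'I_n.+1) : (block j <= c.+1)%nat.
Proof. by apply/bigmax_leqP => i _; apply: ltn_ord. Qed.

Lemma block_vertex (b : 'I_c.+1) : block (Ordinal (k_lt b)) = b.+1.
Proof.
apply/eqP; rewrite eqn_leq -blockP /= leqnn andbT; apply/bigmax_leqP => i /= kib.
by rewrite ltnS leqNgt; apply/negP => /k_incr; rewrite ltnNge kib.
Qed.

Lemma block_max : block ord_max = c.+1.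
Proof.
apply/eqP; rewrite eqn_leq block_le -(blockP ord_max).
by rewrite (leq_trans (k_le_max _)).
Qed.

Definition block_gcd (b : 'I_c.+1) : nat := \big[gcdn/0]_(j | block j == b.+1) t j.

Lemma block_gcd_dvd (j : 'I_n.+1) (b : 'I_c.+1) : block j = b.+1 -> (block_gcd b %| t j)%nat.
Proof. by move=> jb; apply: (biggcdn_inf j); rewrite ?jb. Qed.

Lemma block_gcd_gt0 b : (0 < block_gcd b)%nat.
Proof.
have := block_gcd_dvd (block_vertex b).
by rewrite lt0n; apply: contraTneq => ->; rewrite dvd0n -lt0n t_pos.
Qed.

Lemma block_gcd_max : t ord_max = 1%nat -> block_gcd ord_max = 1%nat.
Proof. by move=> t1; apply/eqP; rewrite -dvdn1 -t1 block_gcd_dvd ?block_max. Qed.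

Let pre (lam : 'I_c.+1 -> R) (b : nat) := \sum_(i : 'I_c.+1 | (i < b)%nat) lam i.

Let face_comb_mxE (lam : 'I_c.+1 -> R) (j : 'I_n.+1) :
  (\sum_i lam i *: toR (lh_vertex t (k i))) 0 j = (t j)%:R * pre lam (block j).
Proof. by rewrite lh_vertex_comb; congr (_ * _); apply: eq_bigl => i; rewrite blockP. Qed.

Let gcd_comb_mxE (lam : 'I_c.+1 -> R) (b : 'I_c.+1) :
  (\sum_(i : 'I_c.+1) lam i *: toR (lh_vertex block_gcd i)) 0 b = (block_gcd b)%:R * pre lam b.+1.
Proof. by rewrite lh_vertex_comb. Qed.

Definition rescale (y : 'rV[int]_c.+1) : 'rV[int]_n.+1 :=
  \row_j if block j is b.+1 then (t j %/ block_gcd (inord b))%:Z * y 0 (inord b) else 0.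

Lemma rescale_comb (y : 'rV[int]_c.+1) (lam : 'I_c.+1 -> R) :
  toR y = \sum_(i : 'I_c.+1) lam i *: toR (lh_vertex block_gcd i) ->
  toR (rescale y) = \sum_i lam i *: toR (lh_vertex t (k i)).
Proof.
move=> y_lam; apply/rowP => j; rewrite face_comb_mxE !mxE.
case jb: (block j) => [|b].
  by rewrite /pre big_pred0 ?mulr0 // => i; rewrite ltn0.
have bc : (b < c.+1)%nat by have := block_le j; rewrite jb.
rewrite intrM.
have -> : (y 0 (inord b))%:~R = toR y 0 (inord b) by rewrite mxE.
rewrite y_lam gcd_comb_mxE inordK // mulrA -pmulrn -natrM divnK //.
by apply: block_gcd_dvd; rewrite inordK.
Qed.

Lemma rescale_inj : injective rescale.
Proof.
move=> y1 y2 eq12; apply/rowP => b.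
have /rowP/(_ (Ordinal (k_lt b))) := eq12; rewrite !mxE block_vertex inord_val.
apply: mulfI; rewrite eqz_nat -lt0n divn_gt0 ?block_gcd_gt0 //.
by rewrite dvdn_leq // block_gcd_dvd // block_vertex.
Qed.

Lemma rescale_max y : t ord_max = 1%nat -> rescale y 0 ord_max = y 0 ord_max.
Proof.
move=> t1; rewrite mxE block_max.
have -> : inord c = ord_max :> 'I_c.+1 by apply: val_inj; rewrite /= inordK.
by rewrite block_gcd_max // t1 divnn mul1r.
Qed.

Lemma open_pp_rescale (x : 'rV[int]_n.+1) :
  open_pp (fun i => toR (lh_vertex t (k i))) (toR x) <->
  exists2 y, open_pp (fun i : 'I_c.+1 => toR (lh_vertex block_gcd i)) (toR y) & x = rescale y.
Proof.
split => [[lam [lam01 x_lam]]|[y [lam [lam01 y_lam]] ->]]; last first.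
  by exists lam; split => //; apply: rescale_comb.
have y_int b : (block_gcd b)%:R * pre lam b.+1 \is a Num.int.
  rewrite mulrC; apply: int_num_gcd => j /eqP jb; apply/intrP; exists (x 0 j).
  by have /rowP/(_ j) := x_lam; rewrite face_comb_mxE jb mxE => ->; rewrite mulrC.
have /choice[y yP] b : exists z : int, (block_gcd b)%:R * pre lam b.+1 = z%:~R.
  exact/intrP.
have y_lam : toR (\row_b y b) = \sum_(i : 'I_c.+1) lam i *: toR (lh_vertex block_gcd i).
  by apply/rowP => b; rewrite gcd_comb_mxE yP !mxE.
exists (\row_b y b); first by exists lam.
by apply: toR_inj; rewrite (rescale_comb y_lam) x_lam.
Qed.

Lemma open_pp_slice_rescale (z : int) : t ord_max = 1%nat ->
  [set x | open_pp (fun i => toR (lh_vertex t (k i))) (toR x) /\ x 0 ord_max = z] =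
  rescale @` [set y | open_pp (fun i : 'I_c.+1 => toR (lh_vertex block_gcd i)) (toR y) /\
                      y 0 ord_max = z].
Proof.
move=> t1; apply/seteqP; split => [x [/open_pp_rescale[y y_pp ->] xz]|_ [y [y_pp yz] <-]].
  by exists y => //; split; rewrite // -(rescale_max y t1).
by split; [apply/open_pp_rescale; exists y | rewrite rescale_max].
Qed.

End FaceBlocks.

Lemma card_fset_set_image (T U : choiceType) (f : T -> U) (A : set T) :
  injective f -> #|` fset_set (f @` A)| = #|` fset_set A|.
Proof.
move=> f_inj; have [A_fin|A_inf] := pselect (finite_set A).
  by rewrite fset_set_image // card_imfset.
have fA_inf : ~ finite_set (f @` A).
  by rewrite (eq_finite_set (inj_card_eq (A := A) (in2W f_inj))).
by rewrite /fset_set; case: pselect => [/fA_inf|_] //; case: pselect.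
Qed.

Lemma lstar_v_lh_face (n m : nat) (s : 'I_n -> nat) (k : 'I_m.+1 -> 'I_n.+1) :
  (forall j, (0 < s j)%nat) -> {homo k : i j / (i < j)%nat} ->
  exists2 mu : 'I_m -> nat, (forall b, (0 < mu b)%nat) &
    lstar_v (fun i => lh_vertex s (k i)) = lstar_v (fun i : 'I_m.+1 => lh_vertex mu i).
Proof.
move=> s_pos k_incr; pose t := ext1 s; pose k' i := nat_of_ord (k i).
have t_pos j : (0 < t j)%nat by rewrite /t /ext1; case: unlift.
have t_max : t ord_max = 1%nat by rewrite /t /ext1 unlift_none.
have k'_le : (k' ord_max <= n)%nat := leq_ord (k ord_max).
pose nu := block_gcd t k'.
exists (fun b => nu (lift ord_max b)) => [b|]; first exact: block_gcd_gt0.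
have lift_face i : lift1 (toR (lh_vertex s (k i))) = toR (lh_vertex t (k' i)).
  exact: lift1_lh_vertex (leq_ord (k i)).
have lift_mu (i : 'I_m.+1) :
    lift1 (toR (lh_vertex (fun b => nu (lift ord_max b)) i)) = toR (lh_vertex nu i).
  rewrite (lift1_lh_vertex _ (leq_ord i)); congr toR; apply/rowP => j; rewrite !mxE /ext1.
  by case: unliftP => [j' ->|->] //; rewrite /nu block_gcd_max.
apply: eq_poly => z _; congr (_%:Z); rewrite !in_open_ppE (funext lift_face) (funext lift_mu).
by rewrite open_pp_slice_rescale // card_fset_set_image //; apply: rescale_inj.
Qed.

Unset Implicit Arguments.

Theorem theorem5p5 (n : nat) (s : 'I_n -> nat) (s_pos : forall i, (0 < s i)%nat)
  (F : set 'rV[R]_n) (m : nat) :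
  is_face (lecture_hall s) F -> F !=set0 -> has_dim F m ->
  exists mu : 'I_m -> nat, (forall i, (0 < mu i)%nat) /\ lstar m F = dpoly mu.
Proof.
rewrite (lecture_hall_conv s_pos) => F_face F_ne.
have [c [k [k_incr ->]]] := face_conv F_face F_ne.
have k_free : aff_free (fun i => toR (lh_vertex s (k i))).
  apply: (aff_free_comp (lh_vertex_aff_free s_pos)).
  by move=> i j /(congr1 val) /(incr_ord_inj k_incr).
move=> /(has_dim_conv k_free) cm; subst c.
have [mu mu_pos lstar_mu] := lstar_v_lh_face s_pos k_incr.
exists mu; split => //.
rewrite (@lstar_simplex _ _ _ (fun i => lh_vertex s (k i))); last by split => //; apply/aff_indepP.
rewrite lstar_mu /dpoly (@lstar_simplex _ _ _ (fun i : 'I_m.+1 => lh_vertex mu i)) //.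
by split; [apply/aff_indepP/lh_vertex_aff_free | apply: lecture_hall_conv].
Qed.
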